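(* Let $n>2k\geq 4$ be integers. Suppose that $\mathcal{F},\mathcal{G}\subset\binom{[n]}{k}$ are non-trivial and cross-intersecting, and assume $|\mathcal{F}(\hat{1})|\geq\binom{n-2}{k-2}$ and $|\mathcal{G}(\hat{1})|\geq\binom{n-2}{k-2}$. Then: (i) $\mathcal{F}_0\cup\mathcal{G}_1$ and $\mathcal{F}_1\cup\mathcal{G}_0$ are intersecting; (ii) if $\min\{|\mathcal{F}(\hat{1})|,|\mathcal{G}(\hat{1})|\}>\binom{n-2}{k-2}$, then $\mathcal{F}_0\cup\mathcal{G}_1$ and $\mathcal{F}_1\cup\mathcal{G}_0$ are also non-trivial.
   Context: $[n]=\{1,\ldots,n\}$, $[2,n]=\{2,\ldots,n\}$, and $\binom{X}{k}$ is the family of $k$-subsets of $X$. Families $\mathcal{F},\mathcal{G}$ are cross-intersecting if $F\cap G\neq\emptyset$ for all $F\in\mathcal{F},G\in\mathcal{G}$; a family is intersecting if any two of its members intersect; a family is non-trivial if the intersection of all its members is empty. For a family $\mathcal{H}$, $\mathcal{H}(\hat{1})=\{H\in\mathcal{H}\colon 1\in H\}$ and $\mathcal{H}(\bar{1})=\{H\in\mathcal{H}\colon 1\notin H\}$. The lexicographic order on $k$-sets is defined by $F<_L G$ iff $\min(F\setminus G)<\min(G\setminus F)$. For a ground set $X$ and $1\leq m\leq\binom{|X|}{k}$, $\mathcal{L}(X,k,m)$ denotes the family of the first $m$ sets of $\binom{X}{k}$ in lexicographic order. For $\mathcal{H}\subset\binom{[n]}{k}$, define $\mathcal{H}_1=\mathcal{L}([n],k,|\mathcal{H}(\hat{1})|)$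 and $\mathcal{H}_0=\mathcal{L}([2,n],k,|\mathcal{H}(\bar{1})|)$ (the first $|\mathcal{H}(\bar 1)|$ sets of $\binom{[2,n]}{k}$ in lexicographic order). *)

(* Ground set [n] = {1,...,n} is modelled by 'I_n,
   the ordinal i : 'I_n standing for the integer i+1 (order-preserving
   relabelling).  So the element "1" of the paper is the ordinal with value 0. *)
From mathcomp Require Import all_boot all_order.
Set Implicit Arguments. Unset Strict Implicit. Unset Printing Implicit Defensive.

Section Defs.
Variable n : nat.
Local Notation T := 'I_n.

Definition ground : {set T} := [set: T].
Definition ground2 : {set T} := [set x : T | nat_of_ord x != 0].

Definition ksets (X : {set T}) (k : nat) : {set {set T}} :=
  [set A : {set T} | (A \subset X) && (#|A| == k)].

Definition cross_intersecting (F G : {set {set T}}) : Prop :=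
  forall A B, A \in F -> B \in G -> A :&: B != set0.

Definition intersecting (F : {set {set T}}) : Prop := cross_intersecting F F.

Definition nontrivial (F : {set {set T}}) : Prop :=
  \bigcap_(A in F) A = set0.

Definition hat1 (H : {set {set T}}) : {set {set T}} :=
  [set A in H | [exists x in A, nat_of_ord x == 0]].
Definition bar1 (H : {set {set T}}) : {set {set T}} :=
  [set A in H | ~~ [exists x in A, nat_of_ord x == 0]].

(* lexicographic order: F <_L G iff min(F\G) < min(G\F), i.e. some element
   of F\G is smaller than every element of G\F (used on distinct k-sets,
   where both differences are non-empty). *)
Definition lexlt (A B : {set T}) : bool :=
  [exists i in A :\: B, [forall j in B :\: A, i < j]].

(* L(X,k,m): the first m sets of binom(X,k) in lexicographic order, i.e.
   those having fewer than m predecessors in binom(X,k). *)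
Definition lexfirst (X : {set T}) (k m : nat) : {set {set T}} :=
  [set A in ksets X k | #|[set B in ksets X k | lexlt B A]| < m].

Definition H1 (k : nat) (H : {set {set T}}) : {set {set T}} :=
  lexfirst ground k #|hat1 H|.
Definition H0 (k : nat) (H : {set {set T}}) : {set {set T}} :=
  lexfirst ground2 k #|bar1 H|.
End Defs.

From mathcomp Require Import all_boot all_order zify.
Set Implicit Arguments. Unset Strict Implicit. Unset Printing Implicit Defensive.

(* Write 1 and 2 for the two smallest elements of [n].  Deleting 1 from the members
   of G(1^) gives (k-1)-subsets of [2,n] that cross-intersect F(1bar), so by Hilton's
   lemma (lexicographic initial segments of the same sizes still cross-intersect)
   L([2,n], k-1, |G(1^)|) cross-intersects F_0.  In the lexicographic order the
   (k-1)-subsets of [2,n] containing 2 come first, and there are binom(n-2,k-2) of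
   them, so the first segment contains all of them; since n > 2k this forces 2 into
   every member of F_0.  Members of G_1 contain 1 and, with 1 deleted, lie in that
   first segment, which gives (i).  For (ii), F_0 is non-empty and avoids 1, and once
   |G(1^)| exceeds the number binom(n-2,k-2) of k-sets through 1 and 2, G_1 contains
   the first set through 1 avoiding 2 and, for every other x, a set through 1 and 2
   avoiding x.
   Hilton's lemma is proved with Kruskal-Katona compressions: the complements of one
   family can be replaced by a lexicographic final segment without enlarging its
   shadow, and the sets outside that shadow form an initial segment. *)

Section LexOrder.
Variable n : nat.
Local Notation T := 'I_n.
Implicit Types (A B C U V : {set T}) (W : {set {set T}}).

Lemma lexltP A B :
  reflect (exists2 i, i \in A :\: B & forall j, j \in B :\: A -> i < j) (lexlt A B).
Proof.
apply: (iffP exists_inP) => [[i Ai /forall_inP]|[i Ai /forall_inP]]; by exists i.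
Qed.

Lemma lexlt_irr A : ~~ lexlt A A.
Proof. by apply/lexltP => -[i]; rewrite setDv inE. Qed.

Lemma lexlt_trans A B C : lexlt A B -> lexlt B C -> lexlt A C.
Proof.
move=> /lexltP[a /setDP[aA aB] ltaBA] /lexltP[b /setDP[bB bC] ltbCB].
have [ltab|ltba|/val_inj eqab] := ltngtP a b; last by rewrite eqab bB in aB.
- have aC : a \notin C.
    by apply: (contraL _ ltab) => aC; rewrite -leqNgt ltnW // ltbCB // inE aC aB.
  apply/lexltP; exists a; first by rewrite inE aC.
  move=> j /setDP[jC jA]; have [jB|jB] := boolP (j \in B).
    by rewrite ltaBA // inE jB jA.
  by rewrite (ltn_trans ltab) // ltbCB // inE jC jB.
- have bA : b \in A.
    by apply: (contraLR _ ltba) => bA; rewrite -leqNgt ltnW // ltaBA // inE bA bB.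
  apply/lexltP; exists b; first by rewrite inE bA bC.
  move=> j /setDP[jC jA]; have [jB|jB] := boolP (j \in B).
    by rewrite (ltn_trans ltba) // ltaBA // inE jB jA.
  by rewrite ltbCB // inE jC jB.
Qed.

Lemma lexlt_total A B : A != B -> lexlt A B || lexlt B A.
Proof.
move=> neqAB; pose D := (A :\: B) :|: (B :\: A).
have [x Dx] : exists x, x \in D.
  apply/set0Pn; apply: (contraNneq _ neqAB) => D0; apply/eqP/setP => y.
  by move/setP/(_ y): D0; rewrite !inE; case: (y \in A); case: (y \in B).
have [m Dm minm] := arg_minnP (fun i : T => val i) Dx.
have ltm j : j \in D -> j != m -> m < j.
  by move=> Dj neqjm; rewrite ltn_neqAle minm // andbT val_eqE eq_sym.
have [mAB|mBA] := setUP Dm; apply/orP; [left|right]; apply/lexltP; exists m => // j Dj.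
  apply: ltm; first by rewrite /D inE Dj orbT.
  by apply: contraTneq Dj => ->; case/setDP: mAB => mA _; rewrite inE mA.
apply: ltm; first by rewrite /D inE Dj.
by apply: contraTneq Dj => ->; case/setDP: mBA => mB _; rewrite inE mB.
Qed.

Lemma lexlt_mem A B x :
  lexlt A B -> x \in B -> (forall y : T, y < x -> y \in A -> y \in B) -> x \in A.
Proof.
move=> /lexltP[i /setDP[iA iB] lti] Bx Hx; apply: contraT => Ax.
have ltix : i < x by rewrite lti // inE Ax.
by rewrite (Hx i ltix iA) in iB.
Qed.

Lemma lexlt_disjoint U V u : [disjoint U & V] -> u \in U ->
  (forall j, j \in V -> u < j) -> lexlt U V.
Proof.
move=> dUV Uu ltu; apply/lexltP; exists u; first by rewrite inE Uu (disjointFr dUV).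
by move=> j /setDP[Vj _]; apply: ltu.
Qed.

Lemma lexlt_setU1 x A B : x \notin A -> lexlt A B -> lexlt (x |: A) (x |: B).
Proof.
move=> Ax /lexltP[i /setDP[Ai Bi] lti]; apply/lexltP; exists i.
  by rewrite !inE Ai (negbTE Bi) orbT orbF andbT; apply: (contraNneq _ Ax) => <-.
move=> j; rewrite !inE negb_or => /andP[/andP[/negbTE jx Aj]]; rewrite jx /= => Bj.
by apply: lti; rewrite inE Bj Aj.
Qed.

Definition lexsucc A := [set B | lexlt A B].

Lemma card_lexsucc_lt A B : lexlt A B -> #|lexsucc B| < #|lexsucc A|.
Proof.
move=> ltAB; apply: proper_card; apply/properP; split.
  by apply/subsetP => C; rewrite !inE => /(lexlt_trans ltAB).
by exists B; rewrite !inE ?ltAB // lexlt_irr.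
Qed.

Lemma exists_lexmin W C0 :
  C0 \in W -> exists2 C, C \in W & forall B, B \in W -> ~~ lexlt B C.
Proof.
move=> WC0; have [C WC maxC] := arg_maxnP (fun A => #|lexsucc A|) WC0.
exists C => // B WB; apply: contraTN (maxC B WB) => ltBC.
by rewrite -ltnNge card_lexsucc_lt.
Qed.

End LexOrder.

Section KSets.
Variable n : nat.
Local Notation T := 'I_n.
Implicit Types (A B C S X Y : {set T}) (G W : {set {set T}}) (m r : nat).

Lemma card_ksets X r : #|ksets X r| = 'C(#|X|, r).
Proof. exact: cards_draws. Qed.

Lemma exists_ksets X r : r <= #|X| -> exists S, S \in ksets X r.
Proof. by rewrite -bin_gt0 -card_ksets card_gt0 => /set0Pn. Qed.

Lemma exists_ksets_mem X r x : x \in X -> 0 < r <= #|X| ->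
  exists2 S, S \in ksets X r & x \in S.
Proof.
move=> Xx /andP[r_gt0 le_rX].
have [S /setIdP[sSX /eqP cardS]] : exists S, S \in ksets (X :\ x) r.-1.
  by apply: exists_ksets; rewrite (cardsD1 x X) Xx in le_rX; lia.
have xS : x \notin S by apply/negP => /(subsetP sSX); rewrite !inE eqxx.
exists (x |: S); last exact: setU11.
rewrite inE subUset sub1set Xx (subset_trans sSX) ?subsetDl //=.
by rewrite cardsU1 xS cardS add1n prednK.
Qed.

Lemma card_ksets_supset X Y r :
  #|[set S in ksets X r | Y \subset S]| <= 'C(#|X :\: Y|, r - #|Y|).
Proof.
have injD : {in [set S in ksets X r | Y \subset S] &, injective (fun S => S :\: Y)}.
  move=> S S' /setIdP[_ sYS] /setIdP[_ sYS'] /setP eqSS'; apply/setP => x.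
  have [Yx|Yx] := boolP (x \in Y); first by rewrite (subsetP sYS) ?(subsetP sYS').
  by move: (eqSS' x); rewrite !inE Yx.
rewrite -card_ksets -(card_in_imset injD); apply/subset_leq_card/subsetP.
move=> _ /imsetP[S /setIdP[/setIdP[sSX /eqP cardS] sYS] ->].
by rewrite inE setSD //= cardsDS // cardS.
Qed.

Definition lexpred X r C := [set B in ksets X r | lexlt B C].

Lemma in_lexfirst X r m C :
  (C \in lexfirst X r m) = (C \in ksets X r) && (#|lexpred X r C| < m).
Proof. by rewrite inE. Qed.

Lemma lexfirst_ksets X r m C : C \in lexfirst X r m -> C \in ksets X r.
Proof. by rewrite in_lexfirst => /andP[]. Qed.

Lemma card_lexpred_le X r C W :
  (forall B, B \in ksets X r -> lexlt B C -> B \in W) -> #|lexpred X r C| <= #|W|.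
Proof.
by move=> predW; apply/subset_leq_card/subsetP => B /setIdP[XB /predW]; apply.
Qed.

Lemma card_lexpred_lt X r C W : C \in W ->
  (forall B, B \in ksets X r -> lexlt B C -> B \in W) -> #|lexpred X r C| < #|W|.
Proof.
move=> WC predW; apply: proper_card; apply/properP; split.
  by apply/subsetP => B /setIdP[XB /predW]; apply.
by exists C; rewrite // inE (negbTE (lexlt_irr C)) andbF.
Qed.

Lemma lexfirst_neq0 X r m C0 : 0 < m -> C0 \in ksets X r ->
  exists C, C \in lexfirst X r m.
Proof.
move=> m_gt0 XC0; have [C XC minC] := exists_lexmin XC0.
exists C; rewrite in_lexfirst XC (@leq_trans 1) //= ltnS leqn0 cards_eq0.
apply/eqP/setP => B; rewrite in_set0 /lexpred inE.
by case XB: (B \in ksets X r); rewrite // (negbTE (minC B XB)).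
Qed.

Lemma mem_lexfirst_supset X r m Y C : C \in ksets X r -> Y \subset C ->
  (forall B, B \in ksets X r -> lexlt B C -> Y \subset B) ->
  'C(#|X :\: Y|, r - #|Y|) <= m -> C \in lexfirst X r m.
Proof.
move=> XC sYC predY le_m; rewrite in_lexfirst XC (leq_trans _ le_m) //.
apply: leq_trans (card_ksets_supset X Y r).
by apply: card_lexpred_lt => [|B XB ltBC]; rewrite inE ?XC ?sYC ?XB ?predY.
Qed.

Lemma mem_lexfirst_supset_lt X r m Y C : C \in ksets X r ->
  (forall B, B \in ksets X r -> lexlt B C -> Y \subset B) ->
  'C(#|X :\: Y|, r - #|Y|) < m -> C \in lexfirst X r m.
Proof.
move=> XC predY lt_m; rewrite in_lexfirst XC (leq_ltn_trans _ lt_m) //.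
apply: leq_trans (card_ksets_supset X Y r).
by apply: card_lexpred_le => B XB ltBC; rewrite inE XB predY.
Qed.

Definition lex_upclosed X r G :=
  forall A B, A \in G -> B \in ksets X r -> lexlt A B -> B \in G.
Definition lex_downclosed X r G :=
  forall A B, A \in G -> B \in ksets X r -> lexlt B A -> B \in G.

Lemma lexfirst_sub X r m G : G \subset ksets X r -> lex_downclosed X r G ->
  m <= #|G| -> lexfirst X r m \subset G.
Proof.
move=> sGX downG le_mG; apply/subsetP => C; rewrite in_lexfirst => /andP[XC ltCm].
apply: contraLR ltCm => GC; rewrite -leqNgt (leq_trans le_mG) //.
apply/subset_leq_card/subsetP => E GE; rewrite /lexpred inE (subsetP sGX E GE) /=.
have neqEC : E != C by apply: contraNneq GC => <-.
by case/orP: (lexlt_total neqEC) => // ltCE; rewrite (downG E C GE XC ltCE) in GC.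
Qed.

End KSets.

Section Compression.
Variable n : nat.
Local Notation T := 'I_n.
Implicit Types (A B D P U V X : {set T}) (F : {set {set T}}) (p r : nat).

Definition compressible U V A := (U \subset A) && [disjoint V & A].
Definition compress U V A := if compressible U V A then A :\: U :|: V else A.
Definition compress_at U V F A := if compress U V A \in F then A else compress U V A.
Definition compressF U V F := [set compress_at U V F A | A in F].
Definition compressed U V F := [forall A in F, compress U V A \in F].
Definition shadow F p :=
  [set P : {set T} | (#|P| == p) && [exists A in F, P \subset A]].

Lemma mem_shadow F p A P : A \in F -> P \subset A -> #|P| = p -> P \in shadow F p.
Proof. by move=> FA sPA cardP; rewrite inE cardP eqxx; apply/exists_inP; exists A. Qed.

Lemma shadowP F p P :
  reflect (#|P| = p /\ exists2 A, A \in F & P \subset A) (P \in shadow F p).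
Proof.
by rewrite inE; apply: (iffP andP) => -[/eqP-> /exists_inP]; split.
Qed.

Lemma compress0 A : compress set0 set0 A = A.
Proof. by rewrite /compress; case: ifP; rewrite // setD0 setU0. Qed.

Lemma compressed0 F : compressed set0 set0 F.
Proof. by apply/forall_inP => A; rewrite compress0. Qed.

Lemma compress_inj U V A A' : compressible U V A -> compressible U V A' ->
  A :\: U :|: V = A' :\: U :|: V -> A = A'.
Proof.
move=> /andP[sUA dVA] /andP[sUA' dVA'] /setP eqAA'; apply/setP => x.
have [Ux|Ux] := boolP (x \in U); first by rewrite (subsetP sUA) ?(subsetP sUA').
have [Vx|Vx] := boolP (x \in V); first by rewrite (disjointFr dVA) ?(disjointFr dVA').
by move: (eqAA' x); rewrite !inE (negbTE Ux) (negbTE Vx) !orbF.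
Qed.

Lemma compress_at_inj U V F : {in F &, injective (compress_at U V F)}.
Proof.
move=> A A' FA FA'; rewrite /compress_at.
case: ifP => FcA; case: ifP => FcA' // eqAA'.
- by rewrite -eqAA' FA in FcA'.
- by rewrite eqAA' FA' in FcA.
move: FcA FcA' eqAA'; rewrite /compress.
case: ifP => cA; last by rewrite FA.
by case: ifP => cA'; [move=> _ _; apply: compress_inj | rewrite FA'].
Qed.

Lemma card_compressF U V F : #|compressF U V F| = #|F|.
Proof. exact/card_in_imset/compress_at_inj. Qed.

Lemma card_compress U V A : [disjoint U & V] -> #|U| = #|V| ->
  #|compress U V A| = #|A|.
Proof.
move=> dUV cardUV; rewrite /compress; case: ifP => // /andP[sUA dVA].
rewrite cardsU cardsD (setIidPr sUA) setIDAC disjoint_setI0 1?disjoint_sym //.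
by rewrite set0D cards0 subn0 -cardUV subnK // subset_leq_card.
Qed.

Lemma compress_ksets X r U V A : V \subset X -> [disjoint U & V] -> #|U| = #|V| ->
  A \in ksets X r -> compress U V A \in ksets X r.
Proof.
move=> sVX dUV cardUV; rewrite !inE card_compress // => /andP[sAX ->].
rewrite andbT /compress; case: ifP => // _.
by rewrite subUset sVX andbT (subset_trans (subsetDl _ _)).
Qed.

Lemma compressF_ksets X r U V F : V \subset X -> [disjoint U & V] -> #|U| = #|V| ->
  F \subset ksets X r -> compressF U V F \subset ksets X r.
Proof.
move=> sVX dUV cardUV sFX; apply/subsetP => _ /imsetP[A FA ->].
have XA := subsetP sFX A FA; rewrite /compress_at; case: ifP => // _.
exact: compress_ksets.
Qed.

Lemma lexlt_compress U V A : compressible U V A -> [disjoint U & V] -> lexlt U V ->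
  lexlt A (compress U V A).
Proof.
move=> cA dUV /lexltP[u /setDP[Uu Vu] ltu]; rewrite /compress cA.
case/andP: cA => sUA dVA; apply/lexltP; exists u.
  by rewrite !inE Uu Vu (subsetP sUA).
move=> j; rewrite !inE => /andP[/negbTE Aj]; rewrite Aj andbF /= => Vj.
by apply: ltu; rewrite inE Vj (disjointFl dUV).
Qed.

Section ShadowCompression.
Variables (U V : {set T}) (F : {set {set T}}) (p : nat).
Hypotheses (dUV : [disjoint U & V]) (cardUV : #|U| = #|V|).
Hypothesis smaller_compressed : forall V', V' \subset V -> #|V'| < #|V| ->
  exists2 U' : {set T}, U' \subset U & (#|U'| == #|V'|) && compressed U' V' F.

Lemma shadow_compress_closed u A B : u \in U -> A \in F ->
  B \subset compress_at U V F A -> B \in shadow F p -> compress U V B \in shadow F p.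
Proof.
move=> Uu FA sBA shB; have [cB|ncB] := boolP (compressible U V B); last first.
  by rewrite /compress (negbTE ncB).
case/andP: (cB) => sUB dVB.
have FcA : compress U V A \in F.
  apply: contraT => FcA; move: sBA; rewrite /compress_at (negbTE FcA).
  move: FcA; rewrite /compress; case: ifP => [_ _|_]; last by rewrite FA.
  move/subsetP/(_ u (subsetP sUB u Uu)).
  by rewrite !inE Uu (disjointFr dUV Uu).
have sBA' : B \subset A by move: sBA; rewrite /compress_at FcA.
have sUA := subset_trans sUB sBA'.
have [U' sU'U [cardU' FcA']] : exists2 U' : {set T}, U' \subset U &
    #|U'| = #|V :\: A| /\ compress U' (V :\: A) A \in F.
  have [dVA|ndVA] := boolP [disjoint V & A]; first by exists U; rewrite ?(setDidPl dVA).
  have [|U' sU'U /andP[/eqP cardU' /forall_inP cmpU']] :=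
    smaller_compressed (subsetDl V A).
    have [x /setIP[Vx Ax]] : exists x, x \in V :&: A by apply/set0Pn; rewrite setI_eq0.
    apply: proper_card; apply/properP; split; first exact: subsetDl.
    by exists x; rewrite // inE Ax.
  by exists U' => //; split; last exact: cmpU'.
have cA' : compressible U' (V :\: A) A.
  rewrite /compressible (subset_trans sU'U sUA) disjoints_subset.
  by apply/subsetP => x; rewrite !inE => /andP[].
apply: (mem_shadow FcA'); last by rewrite card_compress //; case/shadowP: shB.
rewrite /compress cB cA'; apply/subsetP => x; rewrite !inE => /orP[/andP[Ux Bx]|Vx].
  by rewrite (contra (subsetP sU'U x) Ux) (subsetP sBA' x Bx).
have U'x : x \notin U'.
  by apply/negP => /(subsetP sU'U) Ux; rewrite (disjointFr dUV Ux) in Vx.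
by rewrite U'x Vx andbT /= orbN.
Qed.

Lemma shadow_compress_preimage A B : A \in F -> B \subset compress_at U V F A ->
  #|B| = p -> B \notin shadow F p -> exists2 D, D \in shadow F p & compress U V D = B.
Proof.
move=> FA sBA cardB shB.
have FcA : compress U V A \notin F.
  apply: contra shB => FcA; apply: (mem_shadow FA _ cardB).
  by move: sBA; rewrite /compress_at FcA.
have cA : compressible U V A.
  by apply: contraNT FcA => /negbTE ncA; rewrite /compress ncA.
move: sBA; rewrite /compress_at (negbTE FcA) /compress cA => sBA.
case/andP: (cA) => sUA dVA.
have dUB : [disjoint U & B].
  rewrite disjoints_subset; apply/subsetP => x Ux; rewrite inE.
  by apply/negP => /(subsetP sBA); rewrite !inE Ux (disjointFr dUV Ux).
have [sVB|nsVB] := boolP (V \subset B).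
  pose D := B :\: V :|: U.
  have cD : compressible U V D.
    rewrite /compressible subsetUr disjoints_subset; apply/subsetP => x Vx.
    by rewrite !inE Vx (disjointFl dUV Vx).
  have cDB : compress U V D = B.
    apply/setP => x; rewrite /compress cD !inE.
    have [Vx|Vx] := boolP (x \in V); first by rewrite orbT (subsetP sVB).
    have [Ux|Ux] := boolP (x \in U); last by rewrite /= !orbF.
    by rewrite (disjointFr dUB Ux).
  exists D => //; apply: (mem_shadow FA); last first.
    by rewrite -(card_compress D dUV cardUV) cDB.
  apply/subsetP => x; rewrite !inE => /orP[/andP[Vx /(subsetP sBA)]|/(subsetP sUA)//].
  by rewrite !inE (negbTE Vx) orbF => /andP[].
have [|U' sU'U /andP[_ /forall_inP cmpU']] := smaller_compressed (subsetIl V B).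
  rewrite proper_card // properEneq subsetIl andbT.
  by apply: (contraNneq _ nsVB) => <-; exact: subsetIr.
have cA' : compressible U' (V :&: B) A.
  by rewrite /compressible (subset_trans sU'U sUA) (disjointWl (subsetIl V B) dVA).
case/negP: shB; apply: (mem_shadow (cmpU' A FA) _ cardB).
rewrite /compress cA'; apply/subsetP => x Bx; move: (subsetP sBA x Bx).
rewrite !inE Bx andbT => /orP[/andP[Ux ->]|->]; last by rewrite orbT.
by rewrite (contra (subsetP sU'U x) Ux).
Qed.

(* The shadow of [compressF U V F] lies in the compression of the shadow of [F]. *)
Lemma card_shadow_compressF : #|shadow (compressF U V F) p| <= #|shadow F p|.
Proof.
have [U0|[u Uu]] := set_0Vmem U.
  have /eqP V0 : V == set0 by rewrite -cards_eq0 -cardUV U0 cards0.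
  suff -> : compressF U V F = F by [].
  rewrite /compressF -[RHS]imset_id; apply: eq_imset => A.
  by rewrite /compress_at U0 V0 compress0; case: ifP.
rewrite -(card_compressF U V (shadow F p)); apply/subset_leq_card/subsetP => B.
case/shadowP => cardB [_ /imsetP[A FA ->] sBA].
have [shB|shB] := boolP (B \in shadow F p).
  apply/imsetP; exists B => //.
  by rewrite /compress_at (shadow_compress_closed Uu FA sBA shB).
have [D shD cDB] := shadow_compress_preimage FA sBA cardB shB.
by apply/imsetP; exists D; rewrite // /compress_at cDB (negbTE shB).
Qed.

End ShadowCompression.

End Compression.

Section KruskalKatona.
Variable n : nat.
Local Notation T := 'I_n.
Implicit Types (A B U V X : {set T}) (F G : {set {set T}}) (p r : nat).

Definition admissible X U V :=
  [&& U \subset X, V \subset X, [disjoint U & V], #|U| == #|V| & lexlt U V].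

Definition lexweight G := \sum_(A in G) #|lexsucc A|.

Lemma card_lexsucc_compress_at U V G A : [disjoint U & V] -> lexlt U V ->
  #|lexsucc (compress_at U V G A)| <= #|lexsucc A|.
Proof.
move=> dUV ltUV; rewrite /compress_at; case: ifP => // _.
have [cA|ncA] := boolP (compressible U V A); last by rewrite /compress (negbTE ncA).
exact/ltnW/card_lexsucc_lt/lexlt_compress.
Qed.

Lemma lexweight_compressF U V G : [disjoint U & V] -> lexlt U V ->
  ~~ compressed U V G -> lexweight (compressF U V G) < lexweight G.
Proof.
move=> dUV ltUV /forall_inPn[A GA GcA].
rewrite /lexweight big_imset /=; last exact: compress_at_inj.
rewrite (bigD1 A) //= [X in _ < X](bigD1 A) //= -addSn leq_add //; last first.
  by apply: leq_sum => B _; apply: card_lexsucc_compress_at.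
have cA : compressible U V A.
  by apply: contraNT GcA => /negbTE ncA; rewrite /compress ncA.
by rewrite /compress_at (negbTE GcA) card_lexsucc_lt // lexlt_compress.
Qed.

Lemma compressed_below X G U V : admissible X U V ->
  (forall U' V', admissible X U' V' -> #|U'| < #|U| -> compressed U' V' G) ->
  forall V', V' \subset V -> #|V'| < #|V| ->
  exists2 U' : {set T}, U' \subset U & (#|U'| == #|V'|) && compressed U' V' G.
Proof.
move=> /and5P[sUX sVX dUV /eqP cardUV ltUV] IH V' sV'V ltV'.
have [->|[v V'v]] := set_0Vmem V'.
  by exists set0; rewrite ?sub0set ?cards0 ?compressed0.
case/lexltP: ltUV => u /setDP[Uu _] ltu.
have [|U' /setIdP[sU'U /eqP cardU'] U'u] := exists_ksets_mem (r := #|V'|) Uu.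
  by rewrite cardUV (ltnW ltV') andbT card_gt0; apply/set0Pn; exists v.
exists U'; rewrite // cardU' eqxx; apply: IH; last by rewrite cardU' cardUV.
rewrite /admissible (subset_trans sU'U sUX) (subset_trans sV'V sVX) cardU' eqxx.
have dU'V' := disjointW sU'U sV'V dUV.
rewrite dU'V'; apply: lexlt_disjoint U'u _ => // j V'j.
by apply: ltu; rewrite inE (subsetP sV'V j V'j) (disjointFl dUV) ?(subsetP sV'V).
Qed.

Lemma lex_upclosed_compressed X r G : G \subset ksets X r ->
  (forall U V, admissible X U V -> compressed U V G) -> lex_upclosed X r G.
Proof.
move=> sGX cmpG A B GA XB ltAB.
move: (subsetP sGX A GA) XB.
rewrite !inE => /andP[sAX /eqP cardA] /andP[sBX /eqP cardB].
have adm : admissible X (A :\: B) (B :\: A).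
  apply/and5P; split.
  - exact: subset_trans (subsetDl _ _) sAX.
  - exact: subset_trans (subsetDl _ _) sBX.
  - rewrite disjoints_subset; apply/subsetP => x.
    by rewrite !inE => /andP[/negbTE-> ->].
  - by rewrite !cardsD cardA cardB setIC.
  case/lexltP: ltAB => i ABi lti; apply/lexltP; exists i.
    by move: ABi; rewrite !inE => /andP[/negbTE-> ->].
  by move=> j /setDP[BAj _]; apply: lti.
have cA : compressible (A :\: B) (B :\: A) A.
  rewrite /compressible subsetDl disjoints_subset.
  by apply/subsetP => x; rewrite !inE => /andP[].
suff <- : compress (A :\: B) (B :\: A) A = B by exact: (forall_inP (cmpG _ _ adm)).
apply/setP => x; rewrite /compress cA !inE.
by case: (x \in A); case: (x \in B).
Qed.

(* A family of least [lexweight] among those no worse than [F] is compressed for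
   every admissible pair, by induction on [#|U|], since a compression lowers the
   weight; it is therefore a final segment. *)
Lemma exists_lex_upclosed_shadow X r p F : F \subset ksets X r ->
  exists G, [/\ G \subset ksets X r, #|G| = #|F|,
    #|shadow G p| <= #|shadow F p| & lex_upclosed X r G].
Proof.
move=> sFX; pose ok G := [&& G \subset ksets X r, #|G| == #|F| &
  #|shadow G p| <= #|shadow F p|].
have okF : ok F by rewrite /ok sFX eqxx leqnn.
have [G /and3P[sGX /eqP cardG shG] minG] := arg_minnP lexweight okF.
have cmpG s U V : #|U| = s -> admissible X U V -> compressed U V G.
  elim/ltn_ind: s U V => s IH U V cardU adm; apply: contraT => ncmp.
  have /and5P[_ sVX dUV /eqP cardUV ltUV] := adm.
  have below : forall V', V' \subset V -> #|V'| < #|V| ->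
      exists2 U' : {set T}, U' \subset U & (#|U'| == #|V'|) && compressed U' V' G.
    apply: compressed_below adm _ => U' V' adm'.
    by rewrite cardU => /IH/(_ U' V' erefl adm').
  have okC : ok (compressF U V G).
    rewrite /ok compressF_ksets // card_compressF cardG eqxx /=.
    exact: leq_trans (card_shadow_compressF _ dUV cardUV below) shG.
  by have := minG _ okC; rewrite leqNgt lexweight_compressF.
exists G; split => //; apply: lex_upclosed_compressed => // U V.
exact: cmpG.
Qed.

End KruskalKatona.

Section Hilton.
Variable n : nat.
Local Notation T := 'I_n.
Implicit Types (A B C E P Q X : {set T}) (F G : {set {set T}}) (m p q r : nat).

Lemma setDDK X B : B \subset X -> X :\: (X :\: B) = B.
Proof. by move=> sBX; rewrite setDDr setDv set0U (setIidPr sBX). Qed.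

Lemma ksets_setD X r B : B \in ksets X r -> X :\: B \in ksets X (#|X| - r).
Proof. by rewrite !inE subsetDl => /andP[sBX /eqP <-]; rewrite cardsDS ?eqxx. Qed.

Lemma lexlt_setD X A B : A \subset X -> B \subset X -> lexlt A B ->
  lexlt (X :\: B) (X :\: A).
Proof.
move=> sAX sBX /lexltP[i /setDP[Ai Bi] lti]; apply/lexltP; exists i.
  by rewrite !inE Ai Bi (subsetP sAX).
move=> j; rewrite !inE => /andP[XBj /andP[Aj Xj]]; apply: lti.
by rewrite inE Aj; move: XBj; rewrite Xj andbT negbK.
Qed.

Lemma card_setD_fam X r F : F \subset ksets X r ->
  #|[set X :\: B | B in F]| = #|F|.
Proof.
move=> sFX; apply: card_in_imset => B B' FB FB' eqB.
have [/setIdP[sBX _] /setIdP[sB'X _]] := (subsetP sFX B FB, subsetP sFX B' FB').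
by rewrite -(setDDK sBX) eqB setDDK.
Qed.

Lemma setD_fam_ksets X r F : F \subset ksets X r ->
  [set X :\: B | B in F] \subset ksets X (#|X| - r).
Proof.
by move=> sFX; apply/subsetP => _ /imsetP[B FB ->]; apply/ksets_setD/(subsetP sFX).
Qed.

Lemma lex_downclosed_setD X r G : r <= #|X| -> G \subset ksets X r ->
  lex_upclosed X r G -> lex_downclosed X (#|X| - r) [set X :\: E | E in G].
Proof.
move=> le_rX sGX upG _ Q /imsetP[E GE ->] XQ ltQ.
have /setIdP[sEX _] := subsetP sGX E GE.
have /setIdP[sQX _] := XQ.
apply/imsetP; exists (X :\: Q); last by rewrite setDDK.
apply: (upG E) => //; first by rewrite -[r](subKn le_rX); apply: ksets_setD.
by rewrite -{1}(setDDK sEX) lexlt_setD ?subsetDl.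
Qed.

Lemma shadow_ksets X r p G : G \subset ksets X r -> shadow G p \subset ksets X p.
Proof.
move=> sGX; apply/subsetP => P /shadowP[cardP [E GE sPE]].
have /setIdP[sEX _] := subsetP sGX E GE.
by rewrite inE (subset_trans sPE sEX) cardP eqxx.
Qed.

Lemma shadow_lex_upclosed X r p G : G \subset ksets X r -> lex_upclosed X r G ->
  p <= r -> lex_upclosed X p (shadow G p).
Proof.
move=> sGX upG le_pr P' P /shadowP[_ [E GE sP'E]] XP /lexltP[i /setDP[P'i Pi] lti].
have /setIdP[sEX /eqP cardE] := subsetP sGX E GE.
have /setIdP[sPX /eqP cardP] := XP.
have [V0|[v PEv]] := set_0Vmem (P :\: E).
  by apply: (mem_shadow GE) => //; rewrite -setD_eq0 V0.
set V := P :\: E.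
have Ei : i \in E :\: P by rewrite inE Pi (subsetP sP'E).
have [|U /setIdP[sUEP /eqP cardU] Ui] := exists_ksets_mem (r := #|V|) Ei.
  rewrite card_gt0; apply/andP; split; first by apply/set0Pn; exists v.
  by rewrite !cardsD cardE cardP setIC leq_sub2r.
have dUV : [disjoint U & V].
  apply: disjointWl sUEP _; rewrite disjoints_subset; apply/subsetP => x.
  by rewrite !inE => /andP[/negbTE-> _]; rewrite andbF.
have cE : compressible U V E.
  rewrite /compressible (subset_trans sUEP (subsetDl _ _)) disjoints_subset.
  by apply/subsetP => x; rewrite !inE => /andP[].
have ltUV : lexlt U V.
  apply: lexlt_disjoint Ui _ => // j /setDP[Pj Ej]; apply: lti.
  by rewrite inE Pj andbT; apply: contra (subsetP sP'E j) Ej.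
apply: (mem_shadow (upG E _ GE _ (lexlt_compress cE dUV ltUV))) => //.
  apply: compress_ksets => //; last exact: (subsetP sGX).
  exact: subset_trans (subsetDl _ _) sPX.
apply/subsetP => x Px; rewrite /compress cE /V !inE.
have [_|_] := boolP (x \in E); last by rewrite Px andbF.
by rewrite andbT orbF; apply/negP => /(subsetP sUEP); rewrite inE Px.
Qed.

Lemma leq_card_add_shadow_setD X p q (A B : {set {set T}}) :
  A \subset ksets X p -> B \subset ksets X q -> cross_intersecting A B ->
  #|A| + #|shadow [set X :\: Bm | Bm in B] p| <= #|ksets X p|.
Proof.
move=> sAX sBX cAB; set S := shadow _ p.
have dAS : [disjoint A & S].
  rewrite -setI_eq0; apply/eqP/setP => P; rewrite !inE; apply/andP.
  case=> AP /andP[_ /exists_inP[_ /imsetP[Bm BBm ->] sPXB]].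
  case/negP: (cAB P Bm AP BBm); rewrite -subset0; apply/subsetP => x; rewrite inE.
  by case/andP => Px Bmx; move: (subsetP sPXB x Px); rewrite inE Bmx.
rewrite -cardsUI (disjoint_setI0 dAS) cards0 addn0 subset_leq_card //.
by rewrite subUset sAX (shadow_ksets _ (setD_fam_ksets sBX)).
Qed.

Theorem hilton X p q (A B : {set {set T}}) :
  A \subset ksets X p -> B \subset ksets X q ->
  cross_intersecting A B -> p + q <= #|X| ->
  cross_intersecting (lexfirst X p #|A|) (lexfirst X q #|B|).
Proof.
move=> sAX sBX cAB le_pqX.
have [G [sGX cardG shG upG]] :=
  exists_lex_upclosed_shadow p (setD_fam_ksets sBX).
set J := ksets X p :\: shadow G p.
have leAJ : #|A| <= #|J|.
  have sShX := shadow_ksets p sGX.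
  rewrite cardsDS // leq_subRL ?subset_leq_card // addnC.
  exact: leq_trans (leq_add (leqnn _) shG) (leq_card_add_shadow_setD sAX sBX cAB).
have downJ : lex_downclosed X p J.
  move=> P P' /setDP[XP shP] XP' ltP'P; rewrite inE XP' andbT.
  apply: contra shP => shP'; apply: (shadow_lex_upclosed sGX upG _ shP') => //.
  lia.
have le_qX : q <= #|X| by apply: leq_trans le_pqX; rewrite leq_addl.
have downGc := lex_downclosed_setD (leq_subr _ _) sGX upG.
have sGcX := setD_fam_ksets sGX.
rewrite subKn // in downGc sGcX.
have leBGc : #|B| <= #|[set X :\: E | E in G]|.
  by rewrite (card_setD_fam sGX) cardG (card_setD_fam sBX).
move=> P Q /(subsetP (lexfirst_sub (subsetDl _ _) downJ leAJ)) /setDP[XP shP].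
move=> /(subsetP (lexfirst_sub sGcX downGc leBGc)) /imsetP[E GE ->].
apply: contraNneq shP => PE0; have /setIdP[sPX /eqP cardP] := XP.
apply: (mem_shadow GE) cardP; apply/subsetP => x Px; apply: contraT => Ex.
have : x \in P :&: (X :\: E) by rewrite !inE Px Ex (subsetP sPX).
by rewrite PE0 inE.
Qed.

End Hilton.

Section FirstTwoElements.
Variables (n : nat) (z w : 'I_n).
Hypotheses (z0 : val z = 0) (w1 : val w = 1).
Local Notation T := 'I_n.
Implicit Types (A B C D R S : {set T}) (F G : {set {set T}}) (k : nat).

Lemma neq_zw : z != w.
Proof. by rewrite -val_eqE z0 w1. Qed.

Lemma in_ground2 x : (x \in ground2 n) = (x != z).
Proof. by rewrite inE -val_eqE z0. Qed.

Lemma card_ground2 : #|ground2 n| = n.-1.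
Proof.
suff -> : ground2 n = [set~ z] by rewrite cardsC1 card_ord.
by apply/setP => x; rewrite in_ground2 !inE.
Qed.

Lemma ground2_notin_z S : S \subset ground2 n -> z \notin S.
Proof. by move=> sSX; apply/negP => /(subsetP sSX); rewrite in_ground2 eqxx. Qed.

Lemma exists_val0E A : [exists x in A, nat_of_ord x == 0] = (z \in A).
Proof.
apply/exists_inP/idP => [[x Ax /eqP x0]|Az]; last by exists z; rewrite ?z0.
by rewrite (_ : z = x) //; apply: val_inj; rewrite /= x0 z0.
Qed.

Lemma in_hat1 A F : (A \in hat1 F) = (A \in F) && (z \in A).
Proof. by rewrite inE exists_val0E. Qed.

Lemma in_bar1 A F : (A \in bar1 F) = (A \in F) && (z \notin A).
Proof. by rewrite inE exists_val0E. Qed.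

Lemma card_bar1_gt0 F : nontrivial F -> 0 < #|bar1 F|.
Proof.
move/setP/(_ z); rewrite in_set0 => /negbT; apply: contraR.
rewrite -leqNgt leqn0 cards_eq0 => /eqP bar0; apply/bigcapP => A FA.
apply: contraT => Az; have : A \in bar1 F by rewrite in_bar1 FA.
by rewrite bar0 inE.
Qed.

Lemma lexlt_mem_z B C : lexlt B C -> z \in C -> z \in B.
Proof. by move=> ltBC Cz; apply: lexlt_mem ltBC Cz _ => y; rewrite z0. Qed.

Lemma lexlt_mem_w B C : lexlt B C -> w \in C -> (z \in B -> z \in C) -> w \in B.
Proof.
move=> ltBC Cw zBC; apply: lexlt_mem ltBC Cw _ => y; rewrite w1 ltnS leqn0 => /eqP y0.
by rewrite (_ : y = z) //; apply: val_inj; rewrite /= y0 z0.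
Qed.

Lemma H1_mem_z k G C : G \subset ksets [set: T] k -> C \in H1 k G -> z \in C.
Proof.
move=> sGT; rewrite in_lexfirst => /andP[_]; apply: contraTT => Cz.
rewrite -leqNgt; apply/subset_leq_card/subsetP => A; rewrite in_hat1 => /andP[GA Az].
rewrite /lexpred inE (subsetP sGT A GA); apply/lexltP.
exists z; first by rewrite inE Cz.
move=> j /setDP[Cj _]; rewrite z0 lt0n -z0 val_eqE.
by apply: contraNneq Cz => <-.
Qed.

Lemma H1_setD1_lexfirst k G C : 0 < k -> G \subset ksets [set: T] k -> C \in H1 k G ->
  C :\ z \in lexfirst (ground2 n) k.-1 #|hat1 G|.
Proof.
move=> k_gt0 sGT H1C; have Cz := H1_mem_z sGT H1C.
move: H1C; rewrite !in_lexfirst => /andP[/setIdP[_ /eqP cardC] lt_pred].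
have sCX : C :\ z \subset ground2 n.
  by apply/subsetP => x; rewrite in_ground2 !inE => /andP[].
rewrite inE sCX /=; apply/andP; split.
  by have := cardsD1 z C; rewrite Cz cardC add1n => ->.
apply: leq_ltn_trans lt_pred.
have inj : {in lexpred (ground2 n) k.-1 (C :\ z) &, injective (fun B => z |: B)}.
  move=> B B' /setIdP[/setIdP[sBX _] _] /setIdP[/setIdP[sB'X _] _] eqB.
  by rewrite -(setU1K (ground2_notin_z sBX)) eqB setU1K // ground2_notin_z.
rewrite -(card_in_imset inj); apply/subset_leq_card/subsetP.
move=> _ /imsetP[B /setIdP[/setIdP[sBX /eqP cardB] ltB] ->].
rewrite /lexpred /ground !inE subsetT cardsU1 (ground2_notin_z sBX) cardB.
rewrite add1n prednK //=.
by rewrite -(setD1K Cz) eqxx; apply: lexlt_setU1 (ground2_notin_z sBX) ltB.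
Qed.

Lemma H1_mem_of_pred k G C : C \in ksets [set: T] k ->
  (forall B, B \in ksets [set: T] k -> lexlt B C -> (z \in B) && (w \in B)) ->
  'C(n - 2, k - 2) < #|hat1 G| -> C \in H1 k G.
Proof.
move=> TC predzw lt_hat; apply: (mem_lexfirst_supset_lt (Y := [set z; w])) TC _ _.
  by move=> B TB ltBC; rewrite subUset !sub1set predzw.
by rewrite cardsDS ?subsetT // cardsT card_ord cards2 neq_zw.
Qed.

Section Families.
Variable k : nat.
Hypotheses (k_ge2 : 2 <= k) (lt_kn : 2 * k < n).

Let k_gt0 : 0 < k. Proof. exact: ltnW. Qed.
Let k_le_n1 : k <= n.-1. Proof. lia. Qed.
Let k1k_le_n1 : k.-1 + k <= n.-1. Proof. lia. Qed.
Let k2_lt_n1k : k - 2 < n.-1 - k. Proof. lia. Qed.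
Let k2S : (k - 2).+1 = k.-1. Proof. lia. Qed.
Let k2SS : (k - 2).+2 = k. Proof. lia. Qed.

Variables (F G : {set {set T}}).
Hypotheses (sFT : F \subset ksets [set: T] k) (sGT : G \subset ksets [set: T] k).
Hypothesis cFG : cross_intersecting F G.

Lemma cross_intersecting_lexfirst_H0 :
  cross_intersecting (lexfirst (ground2 n) k.-1 #|hat1 G|) (H0 k F).
Proof.
pose A := [set A :\ z | A in hat1 G].
have cardA : #|A| = #|hat1 G|.
  apply: card_in_imset => A1 A2; rewrite !in_hat1 => /andP[_ A1z] /andP[_ A2z] eqA.
  by rewrite -(setD1K A1z) eqA setD1K.
have sAX : A \subset ksets (ground2 n) k.-1.
  apply/subsetP => _ /imsetP[A1 + ->]; rewrite in_hat1 => /andP[GA1 A1z].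
  have /setIdP[_ /eqP cardA1] := subsetP sGT A1 GA1.
  rewrite inE; apply/andP; split.
    by apply/subsetP => x; rewrite in_ground2 !inE => /andP[].
  by have := cardsD1 z A1; rewrite A1z cardA1 add1n => ->.
have sBX : bar1 F \subset ksets (ground2 n) k.
  apply/subsetP => B; rewrite in_bar1 => /andP[FB Bz].
  have /setIdP[_ cardB] := subsetP sFT B FB.
  rewrite inE cardB andbT; apply/subsetP => x Bx; rewrite in_ground2.
  by apply: contraNneq Bz => <-.
have cAB : cross_intersecting A (bar1 F).
  move=> A2 B /imsetP[A1 + ->]; rewrite in_hat1 in_bar1 => /andP[GA1 A1z] /andP[FB Bz].
  rewrite setIDAC (setDidPl _); first by rewrite setIC cFG.
  by rewrite disjoint_sym disjoints1 inE (negbTE Bz) andbF.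
rewrite -cardA; apply: hilton sAX sBX cAB _.
by rewrite card_ground2 k1k_le_n1.
Qed.

Lemma H0_mem_w D : 'C(n - 2, k - 2) <= #|hat1 G| -> D \in H0 k F -> w \in D.
Proof.
move=> le_hat H0D; apply: contraT => Dw.
have /setIdP[sDX /eqP cardD] := lexfirst_ksets H0D.
have Xw : w \in ground2 n by rewrite in_ground2 eq_sym neq_zw.
have [R /setIdP[sRY /eqP cardR]] :
    exists R, R \in ksets ((ground2 n :\: D) :\ w) (k - 2).
  apply: exists_ksets; rewrite -ltnS; have := cardsD1 w (ground2 n :\: D).
  rewrite in_setD Dw Xw (cardsDS sDX) card_ground2 cardD add1n => <-.
  exact: k2_lt_n1k.
have Rw : w \notin R by apply/negP => /(subsetP sRY); rewrite !inE eqxx.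
have sRX : R \subset ground2 n.
  by apply: subset_trans sRY _; apply: subset_trans (subsetDl _ _) (subsetDl _ _).
have lexfirstS : w |: R \in lexfirst (ground2 n) k.-1 #|hat1 G|.
  apply: (mem_lexfirst_supset (Y := [set w])).
  - by rewrite inE subUset sub1set Xw sRX cardsU1 Rw cardR add1n k2S /=.
  - by rewrite sub1set setU11.
  - move=> B /setIdP[sBX _] ltB; rewrite sub1set (lexlt_mem_w ltB) ?setU11 //.
    by rewrite (negbTE (ground2_notin_z sBX)).
  by rewrite cardsDS ?sub1set // cards1 card_ground2 -!subn1 -!subnDA.
have /set0Pn[x /setIP[/setU1P[->|Rx] Dx]] :=
  cross_intersecting_lexfirst_H0 lexfirstS H0D.
  by rewrite Dx in Dw.
by move: (subsetP sRY x Rx); rewrite !inE Dx andbF.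
Qed.

Lemma intersecting_H0_H1 :
  'C(n - 2, k - 2) <= #|hat1 G| -> intersecting (H0 k F :|: H1 k G).
Proof.
move=> le_hat C1 C2; rewrite !in_setU.
have H1D C : C \in H1 k G -> C :\ z \in lexfirst (ground2 n) k.-1 #|hat1 G| :=
  H1_setD1_lexfirst k_gt0 sGT.
case/orP=> [H0C1|H1C1] /orP[H0C2|H1C2].
- by apply/set0Pn; exists w; rewrite inE !(H0_mem_w le_hat).
- have /set0Pn[x /setIP[/setD1P[_ C2x] C1x]] :=
    cross_intersecting_lexfirst_H0 (H1D C2 H1C2) H0C1.
  by apply/set0Pn; exists x; rewrite inE C1x C2x.
- have /set0Pn[x /setIP[/setD1P[_ C1x] C2x]] :=
    cross_intersecting_lexfirst_H0 (H1D C1 H1C1) H0C2.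
  by apply/set0Pn; exists x; rewrite inE C1x C2x.
- by apply/set0Pn; exists z; rewrite inE !(H1_mem_z sGT).
Qed.

Lemma exists_H1_notin_w : 'C(n - 2, k - 2) < #|hat1 G| ->
  exists2 C, C \in H1 k G & w \notin C.
Proof.
move=> lt_hat.
have wz : z \in [set~ w] by rewrite !inE neq_zw.
have [|C0 /setIdP[sC0w cardC0] C0z] := exists_ksets_mem (r := k) wz.
  by rewrite k_gt0 cardsC1 card_ord k_le_n1.
pose W := [set C in ksets [set: T] k | (z \in C) && (w \notin C)].
have WC0 : C0 \in W.
  by rewrite !inE subsetT cardC0 C0z; apply/negP => /(subsetP sC0w); rewrite !inE eqxx.
have [C /setIdP[TC /andP[Cz Cw]] minC] := exists_lexmin WC0.
exists C => //; apply: H1_mem_of_pred => // B TB ltBC.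
have Bz := lexlt_mem_z ltBC Cz; rewrite Bz; apply: contraT => Bw.
have WB : B \in W by apply/setIdP; rewrite Bz Bw.
by rewrite (negbTE (minC B WB)) in ltBC.
Qed.

Lemma exists_H1_notin x : x != z -> x != w ->
  'C(n - 2, k - 2) < #|hat1 G| -> exists2 C, C \in H1 k G & x \notin C.
Proof.
move=> xz xw lt_hat.
have [R /setIdP[sRY /eqP cardR]] : exists R, R \in ksets (~: (x |: [set z; w])) (k - 2).
  apply: exists_ksets; have := cardsC (x |: [set z; w]).
  rewrite card_ord cardsU1 cards2 !inE negb_or xz xw neq_zw; set c := #|~: _|.
  by clear -lt_kn; lia.
have notinR y : y \in (x |: [set z; w]) -> y \notin R.
  by move=> Yy; apply/negP => /(subsetP sRY); rewrite inE Yy.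
have [Rx Rz Rw] : [/\ x \notin R, z \notin R & w \notin R].
  by split; apply: notinR; rewrite !inE eqxx ?orbT.
exists (z |: (w |: R)); last by rewrite !inE !negb_or xz xw Rx.
apply: H1_mem_of_pred => // [|B TB ltBC].
  by rewrite inE subsetT !cardsU1 !inE negb_or neq_zw Rz Rw cardR !add1n k2SS /=.
have Bz := lexlt_mem_z ltBC (setU11 _ _).
by rewrite Bz (lexlt_mem_w ltBC) ?setU11 // !inE eqxx /= orbT.
Qed.

Lemma nontrivial_H0_H1 : 0 < #|bar1 F| -> 'C(n - 2, k - 2) < #|hat1 G| ->
  nontrivial (H0 k F :|: H1 k G).
Proof.
move=> bar_gt0 lt_hat; apply/setP => x; rewrite in_set0.
apply/negbTE/negP => /bigcapP allx.
have [xz|nxz] := eqVneq x z.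
  have [C0 XC0] : exists C0, C0 \in ksets (ground2 n) k.
    by apply: exists_ksets; rewrite card_ground2 k_le_n1.
  have [D H0D] := lexfirst_neq0 bar_gt0 XC0.
  have /setIdP[sDX _] := lexfirst_ksets H0D.
  by have := allx D; rewrite in_setU H0D xz (negbTE (ground2_notin_z sDX)) => /(_ isT).
have [xw|nxw] := eqVneq x w.
  have [C H1C Cw] := exists_H1_notin_w lt_hat.
  by have := allx C; rewrite in_setU H1C orbT xw (negbTE Cw) => /(_ isT).
have [C H1C Cx] := exists_H1_notin nxz nxw lt_hat.
by have := allx C; rewrite in_setU H1C orbT (negbTE Cx) => /(_ isT).
Qed.

End Families.

End FirstTwoElements.

Theorem lemma2p3 (n k : nat) (F G : {set {set 'I_n}}) :
  4 <= 2 * k -> 2 * k < n ->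
  F \subset ksets [set: 'I_n] k -> G \subset ksets [set: 'I_n] k ->
  nontrivial F -> nontrivial G -> cross_intersecting F G ->
  'C(n - 2, k - 2) <= #|hat1 F| -> 'C(n - 2, k - 2) <= #|hat1 G| ->
  (intersecting (H0 k F :|: H1 k G) /\ intersecting (H1 k F :|: H0 k G)) /\
  ('C(n - 2, k - 2) < minn #|hat1 F| #|hat1 G| ->
     nontrivial (H0 k F :|: H1 k G) /\ nontrivial (H1 k F :|: H0 k G)).
Proof.
move=> k4 lt_kn sFT sGT ntF ntG cFG leF leG.
have k_ge2 : 2 <= k by lia.
have n_gt1 : 1 < n by lia.
pose z : 'I_n := Ordinal (ltnW n_gt1); pose w : 'I_n := Ordinal n_gt1.
have z0 : val z = 0 by []; have w1 : val w = 1 by [].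
have cGF : cross_intersecting G F by move=> B A GB FA; rewrite setIC cFG.
split.
  split; last rewrite setUC.
    exact: (intersecting_H0_H1 z0 w1 k_ge2 lt_kn sFT sGT cFG leG).
  exact: (intersecting_H0_H1 z0 w1 k_ge2 lt_kn sGT sFT cGF leF).
rewrite leq_min => /andP[ltF ltG].
split; last rewrite setUC.
  exact: (nontrivial_H0_H1 z0 w1 k_ge2 lt_kn (card_bar1_gt0 z0 ntF) ltG).
exact: (nontrivial_H0_H1 z0 w1 k_ge2 lt_kn (card_bar1_gt0 z0 ntG) ltF).
Qed.
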